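(* Let $\Lambda$ be a row-finite $k$-graph with no sources and $R$ a commutative ring with $1$. The cycline subalgebra $\mathcal{M}$ of ${\rm KP}_R(\Lambda)$ is commutative.
   Context: A $k$-graph is a countable category $\Lambda$ (vertices $\Lambda^0$, paths, maps $r,s$) with a degree functor $d:\Lambda\to\mathbb{N}^k$ satisfying unique factorization: if $d(\lambda)=m+n$ there are unique $\mu,\nu$ with $s(\mu)=r(\nu)$, $d(\mu)=m,d(\nu)=n$, $\lambda=\mu\nu$. $v\Lambda=\{\lambda: r(\lambda)=v\}$, $v\Lambda^n$ those of degree $n$; row-finite with no sources means each $v\Lambda^n$ is finite and nonempty. ${\rm KP}_R(\Lambda)$ is the universal $R$-algebra generated by $p_v$ ($v\in\Lambda^0$), $s_\lambda,s_{\lambda^*}$ ($d(\lambda)\ne0$) with relations (KP1) $p_v$ mutually orthogonal idempotents; (KP2) $s_\lambda s_\mu=s_{\lambda\mu}$, $s_{\mu^*}s_{\lambda^*}=s_{(\lambda\mu)^*}$, $p_{r(\lambda)}s_\lambda=s_\lambda=s_\lambda p_{s(\lambda)}$, $p_{s(\lambda)}s_{\lambda^*}=s_{\lambda^*}=s_{\lambda^*}p_{r(\lambda)}$ when $r(\mu)=s(\lambda)$; (KP3) $s_{\lambda^*}s_\mu=\delta_{\lambda,\mu}p_{s(\lambda)}$ when $d(\lambda)=d(\mu)$; (KP4) $p_v=\sum_{\lambda\in v\Lambda^n}s_\lambda s_{\lambda^*}$ for $n\ne0$. Convention $s_v=s_{v^*}=p_v$. A pair $(\alpha,\beta)\in\Lambda\times\Lambda$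 with $s(\alpha)=s(\beta)$ is a cycline pair if $s_{\alpha\gamma}s_{(\alpha\gamma)^*}=s_{\beta\gamma}s_{(\beta\gamma)^*}$ for all $\gamma\in s(\alpha)\Lambda$. The cycline subalgebra $\mathcal{M}$ is the $R$-subalgebra of ${\rm KP}_R(\Lambda)$ generated by $\{s_\alpha s_{\beta^*}: (\alpha,\beta)\text{ cycline}\}$. *)

From HB Require Import structures.
From mathcomp Require Import all_boot all_order all_algebra.
Set Implicit Arguments. Unset Strict Implicit. Unset Printing Implicit Defensive.
Import GRing.Theory.
Local Open Scope ring_scope.

Definition Nk (k : nat) := {ffun 'I_k -> nat}.
Definition Nk0 (k : nat) : Nk k := [ffun => 0%N].
Definition Nkadd (k : nat) (m n : Nk k) : Nk k := [ffun i => (m i + n i)%N].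

(* ---------- k-graphs ----------
   A k-graph is a countable category (objects = vertices, morphisms = paths,
   range r = codomain, source s = domain, composition lam mu defined when
   s lam = r mu) with a degree functor d into N^k satisfying unique
   factorisation. *)
Record kgraph (k : nat) := KGraph {
  kvert : countType;
  kpath : countType;
  kr : kpath -> kvert;
  ks : kpath -> kvert;
  kid : kvert -> kpath;
  kcomp : kpath -> kpath -> kpath;      (* kcomp lam mu = lam mu, meaningful if ks lam = kr mu *)
  kdeg : kpath -> Nk k;
  kr_id : forall v, kr (kid v) = v;
  ks_id : forall v, ks (kid v) = v;
  kcomp_idl : forall l, kcomp (kid (kr l)) l = l;
  kcomp_idr : forall l, kcomp l (kid (ks l)) = l;
  kr_comp : forall l m, ks l = kr m -> kr (kcomp l m) = kr l;
  ks_comp : forall l m, ks l = kr m -> ks (kcomp l m) = ks m;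
  kcompA : forall l m n, ks l = kr m -> ks m = kr n ->
     kcomp l (kcomp m n) = kcomp (kcomp l m) n;
  kdeg_id : forall v, kdeg (kid v) = Nk0 k;
  kdeg_comp : forall l m, ks l = kr m -> kdeg (kcomp l m) = Nkadd (kdeg l) (kdeg m);
  kfact_ex : forall l (m n : Nk k), kdeg l = Nkadd m n ->
     exists mu nu, [/\ ks mu = kr nu, kdeg mu = m, kdeg nu = n & l = kcomp mu nu];
  kfact_uniq : forall l (m n : Nk k) mu nu mu' nu', kdeg l = Nkadd m n ->
     ks mu = kr nu -> kdeg mu = m -> kdeg nu = n -> l = kcomp mu nu ->
     ks mu' = kr nu' -> kdeg mu' = m -> kdeg nu' = n -> l = kcomp mu' nu' ->
     mu = mu' /\ nu = nu'
}.

Definition row_finite_no_sources (k : nat) (G : kgraph k) : Prop :=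
  forall (v : kvert G) (n : Nk k),
    (exists l : seq (kpath G), forall lam, lam \in l <-> (kr lam = v /\ kdeg lam = n))
    /\ (exists lam, kr lam = v /\ kdeg lam = n).

(* ---------- (possibly non-unital) associative R-algebras ----------
   Kumjian-Pask algebras of graphs with infinitely many vertices are not
   unital, so an R-algebra is an R-module with an associative R-bilinear
   multiplication. *)
Record nualg_axioms (R : comPzRingType) (A : lmodType R) (mul : A -> A -> A) : Prop := {
  nua_mulA : forall x y z, mul x (mul y z) = mul (mul x y) z;
  nua_mulDl : forall x y z, mul (x + y) z = mul x z + mul y z;
  nua_mulDr : forall x y z, mul x (y + z) = mul x y + mul x z;
  nua_scalel : forall (a : R) x y, mul (a *: x) y = a *: mul x y;
  nua_scaler : forall (a : R) x y, mul x (a *: y) = a *: mul x y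
}.

(* ---------- Kumjian-Pask families ----------
   p v = p_v, s lam = s_lam, ss lam = s_{lam^*}; the convention
   s_v = s_{v^*} = p_v is built in for the identity paths. *)
Record KP_family (R : comPzRingType) (k : nat) (G : kgraph k) (A : lmodType R)
    (mul : A -> A -> A) (p : kvert G -> A) (s ss : kpath G -> A) : Prop := {
  kp_conv_s : forall v, s (kid v) = p v;
  kp_conv_ss : forall v, ss (kid v) = p v;
  kp1_idem : forall v, mul (p v) (p v) = p v;
  kp1_orth : forall v w, v <> w -> mul (p v) (p w) = 0;
  kp2_s : forall l m, kr m = ks l -> mul (s l) (s m) = s (kcomp l m);
  kp2_ss : forall l m, kr m = ks l -> mul (ss m) (ss l) = ss (kcomp l m);
  kp2_rs : forall l, mul (p (kr l)) (s l) = s l;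
  kp2_sr : forall l, mul (s l) (p (ks l)) = s l;
  kp2_sss : forall l, mul (p (ks l)) (ss l) = ss l;
  kp2_ssr : forall l, mul (ss l) (p (kr l)) = ss l;
  kp3_eq : forall l, mul (ss l) (s l) = p (ks l);
  kp3_neq : forall l m, kdeg l = kdeg m -> l <> m -> mul (ss l) (s m) = 0;
  kp4 : forall (v : kvert G) (n : Nk k) (l : seq (kpath G)), n <> Nk0 k ->
     uniq l -> (forall lam, lam \in l <-> (kr lam = v /\ kdeg lam = n)) ->
     p v = \sum_(lam <- l) mul (s lam) (ss lam)
}.

(* ---------- The Kumjian-Pask algebra KP_R(Lambda) ----------
   characterised (up to isomorphism) by its universal property: every
   Kumjian-Pask family in an R-algebra B factors through a unique R-algebra
   homomorphism. *)
Definition KP_universal (R : comPzRingType) (k : nat) (G : kgraph k) (A : lmodType R)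
    (mul : A -> A -> A) (p : kvert G -> A) (s ss : kpath G -> A) : Prop :=
  nualg_axioms mul /\ KP_family mul p s ss /\
  forall (B : lmodType R) (mulB : B -> B -> B) (pB : kvert G -> B) (sB ssB : kpath G -> B),
    nualg_axioms mulB -> KP_family mulB pB sB ssB ->
    exists f : A -> B,
      ((forall x y, f (x + y) = f x + f y) /\
       (forall (a : R) x, f (a *: x) = a *: f x) /\
       (forall x y, f (mul x y) = mulB (f x) (f y)) /\
       (forall v, f (p v) = pB v) /\
       (forall l, f (s l) = sB l) /\
       (forall l, f (ss l) = ssB l)) /\
      forall g : A -> B,
        (forall x y, g (x + y) = g x + g y) ->
        (forall (a : R) x, g (a *: x) = a *: g x) ->
        (forall x y, g (mul x y) = mulB (g x) (g y)) ->
        (forall v, g (p v) = pB v) ->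
        (forall l, g (s l) = sB l) ->
        (forall l, g (ss l) = ssB l) ->
        forall x, g x = f x.

Definition cycline_pair (R : comPzRingType) (k : nat) (G : kgraph k) (A : lmodType R)
    (mul : A -> A -> A) (s ss : kpath G -> A) (al be : kpath G) : Prop :=
  ks al = ks be /\
  forall ga, kr ga = ks al ->
    mul (s (kcomp al ga)) (ss (kcomp al ga)) = mul (s (kcomp be ga)) (ss (kcomp be ga)).

Definition in_gen_subalg (R : comPzRingType) (A : lmodType R) (mul : A -> A -> A)
    (S : A -> Prop) (x : A) : Prop :=
  forall P : A -> Prop,
    (forall y, S y -> P y) -> P 0 ->
    (forall y z, P y -> P z -> P (y + z)) ->
    (forall (a : R) y, P y -> P (a *: y)) ->
    (forall y z, P y -> P z -> P (mul y z)) ->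
    P x.

Definition cycline_subalg (R : comPzRingType) (k : nat) (G : kgraph k) (A : lmodType R)
    (mul : A -> A -> A) (s ss : kpath G -> A) : A -> Prop :=
  in_gen_subalg mul (fun x => exists al be, cycline_pair mul s ss al be /\ x = mul (s al) (ss be)).

From HB Require Import structures.
From mathcomp Require Import all_boot all_order all_algebra.
From mathcomp Require Import zify.
Set Implicit Arguments. Unset Strict Implicit. Unset Printing Implicit Defensive.
Import GRing.Theory.
Local Open Scope ring_scope.

(* Let t = s_al s_be^* and u = s_mu s_nu^* with (al, be), (mu, nu) cycline.
   Right multiplication by t sends s_lam^* to s_(be x)^* when lam = al x and
   kills it when the initial segment of lam of degree d(al) is not al; the
   cycline condition says that s_(be x) s_(be x)^* = s_lam s_lam^*.  Two paths
   with the same nonzero range projection share all initial segments, so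
   whether the new path starts with mu is the same as for lam.  Hence for
   d(lam) = d(al) + d(mu), both s_lam^* t u and s_lam^* u t vanish, or both
   are s^* of paths of equal degree and equal range projection, which makes
   them equal.  By (KP4) these products determine p_(r al) t u, so
   t u = p_(r al) u t and u t = p_(r mu) t u, and (KP1) gives t u = u t. *)

Section NonUnitalAlgebra.
Variables (R : comPzRingType) (A : lmodType R) (mul : A -> A -> A).
Hypothesis Halg : nualg_axioms mul.
Local Notation "x ** y" := (mul x y) (at level 40, left associativity).

Lemma mul0x y : 0 ** y = 0.
Proof. by apply: (addrI (0 ** y)); rewrite -(nua_mulDl Halg) !addr0. Qed.

Lemma mulx0 y : y ** 0 = 0.
Proof. by apply: (addrI (y ** 0)); rewrite -(nua_mulDr Halg) !addr0. Qed.

Lemma mul_suml (I : Type) (r : seq I) (F : I -> A) y :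
  (\sum_(i <- r) F i) ** y = \sum_(i <- r) (F i ** y).
Proof. exact: (big_morph (fun a => a ** y) (fun a b => nua_mulDl Halg a b y) (mul0x y)). Qed.

Lemma commute_gen_subalg (S : A -> Prop) g :
  (forall y, S y -> g ** y = y ** g) ->
  forall y, in_gen_subalg mul S y -> g ** y = y ** g.
Proof.
move=> gS y /(_ (fun y => g ** y = y ** g)); apply=> //=.
- by rewrite mul0x mulx0.
- by move=> y1 y2 e1 e2; rewrite (nua_mulDr Halg) (nua_mulDl Halg) e1 e2.
- by move=> a y1 e1; rewrite (nua_scaler Halg) (nua_scalel Halg) e1.
- move=> y1 y2 e1 e2.
  by rewrite (nua_mulA Halg) e1 -(nua_mulA Halg) e2 (nua_mulA Halg).
Qed.

Lemma gen_subalg_comm (S : A -> Prop) :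
  (forall x y, S x -> S y -> x ** y = y ** x) ->
  forall x y, in_gen_subalg mul S x -> in_gen_subalg mul S y -> x ** y = y ** x.
Proof.
move=> Scomm x y Sx Sy; apply: (commute_gen_subalg _ Sy) => z Sz.
by apply/esym/(commute_gen_subalg _ Sx) => w Sw; apply: Scomm.
Qed.

End NonUnitalAlgebra.

Section KumjianPaskFamily.
Variables (R : comPzRingType) (k : nat) (G : kgraph k) (A : lmodType R)
  (mul : A -> A -> A) (p : kvert G -> A) (s ss : kpath G -> A).
Hypotheses (Halg : nualg_axioms mul) (Hkp : KP_family mul p s ss).

Local Notation "x ** y" := (mul x y) (at level 40, left associativity).
Local Notation D := (@kdeg k G).
Local Notation rproj lam := (s lam ** ss lam).
Local Notation cycline := (cycline_pair mul s ss).

Let mulA x y z : x ** (y ** z) = x ** y ** z := nua_mulA Halg x y z.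
Let mul0x := mul0x Halg.
Let mulx0 := mulx0 Halg.

Lemma kdeg_compE l m i : ks l = kr m -> D (kcomp l m) i = (D l i + D m i)%N.
Proof. by move=> lm; rewrite kdeg_comp // ffunE. Qed.

Lemma factor_at (lam : kpath G) (m : Nk k) : (forall i, m i <= D lam i)%N ->
  exists a x, [/\ ks a = kr x, D a = m & lam = kcomp a x].
Proof.
move=> le_m; have Dlam : D lam = Nkadd m [ffun i => D lam i - m i]%N.
  by apply/ffunP => i; rewrite !ffunE subnKC.
by have [a [x [? ? _ ?]]] := kfact_ex Dlam; exists a, x.
Qed.

Lemma ss_rproj lam : ss lam ** rproj lam = ss lam.
Proof. by rewrite mulA (kp3_eq Hkp) (kp2_sss Hkp). Qed.

Lemma ss_eq0 lam : rproj lam = 0 -> ss lam = 0.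
Proof. by move=> e0; rewrite -ss_rproj e0 mulx0. Qed.

Lemma ss_mul_s_comp_eq0 x1 x2 y1 y2 : ks x1 = kr x2 -> ks y1 = kr y2 ->
  D x1 = D y1 -> x1 <> y1 -> ss (kcomp x1 x2) ** s (kcomp y1 y2) = 0.
Proof.
move=> Cx Cy Dxy Nxy.
rewrite -(kp2_ss Hkp (esym Cx)) -(kp2_s Hkp (esym Cy)) -mulA (mulA (ss x1)).
by rewrite (kp3_neq Hkp Dxy Nxy) mul0x mulx0.
Qed.

Lemma prefix_eq_of_rproj_eq x1 x2 y1 y2 : ks x1 = kr x2 -> ks y1 = kr y2 ->
  D x1 = D y1 -> rproj (kcomp x1 x2) = rproj (kcomp y1 y2) ->
  rproj (kcomp x1 x2) != 0 -> x1 = y1.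
Proof.
move=> Cx Cy Dxy He /eqP nz; have [//|/eqP Nxy] := eqVneq x1 y1; case: nz.
rewrite -[ss (kcomp x1 x2)]ss_rproj He (mulA (ss _)).
by rewrite (ss_mul_s_comp_eq0 Cx Cy Dxy Nxy) mul0x mulx0.
Qed.

Lemma ss_eq_of_rproj_eq x y : D x = D y -> rproj x = rproj y -> ss x = ss y.
Proof.
move=> Dxy He; have [x0|nz] := eqVneq (rproj x) 0.
  by rewrite (ss_eq0 x0) ss_eq0 // -He.
have Cx : ks x = kr (kid (ks x)) by rewrite kr_id.
have Cy : ks y = kr (kid (ks y)) by rewrite kr_id.
by rewrite (prefix_eq_of_rproj_eq Cx Cy Dxy) ?kcomp_idr.
Qed.

Lemma ss_comp_mul_gen al be a x : cycline al be -> ks a = kr x -> D a = D al ->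
  ss (kcomp a x) ** (s al ** ss be) = if a == al then ss (kcomp be x) else 0.
Proof.
move=> [Sab _] Cax Da; rewrite -(kp2_ss Hkp (esym Cax)) -mulA (mulA (ss a)).
have [Ea|Na] := eqVneq a al; last first.
  by rewrite (kp3_neq Hkp Da) ?mul0x ?mulx0 //; apply/eqP.
subst a; by rewrite (kp3_eq Hkp) Sab (kp2_sss Hkp) (kp2_ss Hkp) // -Cax Sab.
Qed.

Lemma ss_mul_gen_mul_gen al be mu nu lam a x m y :
  cycline al be -> cycline mu nu -> rproj lam != 0 ->
  (forall i, D al i + D mu i <= D lam i)%N ->
  ks a = kr x -> D a = D al -> lam = kcomp a x ->
  ks m = kr y -> D m = D mu -> lam = kcomp m y ->
  if (a == al) && (m == mu) then
    exists lam', [/\ ss lam ** ((s al ** ss be) ** (s mu ** ss nu)) = ss lam',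
      rproj lam' = rproj lam &
      forall i, (D al i + D mu i + D lam' i = D be i + D nu i + D lam i)%N]
  else ss lam ** ((s al ** ss be) ** (s mu ** ss nu)) = 0.
Proof.
move=> Cab Cmn nz le_lam Cax Da Elam Cmy Dm Emy.
have [Ea|Na] := eqVneq a al; last first.
  by rewrite /= mulA Elam (ss_comp_mul_gen Cab Cax Da) (negPf Na) mul0x.
subst a; have Cbx : ks be = kr x by rewrite -Cab.1.
have Ebx : rproj (kcomp be x) = rproj lam by rewrite Elam; exact/esym/Cab.2/esym.
have [m' [y' [Cmy' Dm' Ebx']]] : exists m' y',
    [/\ ks m' = kr y', D m' = D mu & kcomp be x = kcomp m' y'].
  apply: factor_at => i; have := le_lam i.
  by rewrite Elam !kdeg_compE //; lia.
have Em : m = m'.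
  apply: (prefix_eq_of_rproj_eq Cmy Cmy'); first by rewrite Dm Dm'.
    by rewrite -Emy -Ebx' Ebx.
  by rewrite -Emy.
subst m'; have -> : ss lam ** ((s al ** ss be) ** (s mu ** ss nu)) =
    if m == mu then ss (kcomp nu y') else 0.
  by rewrite mulA Elam (ss_comp_mul_gen Cab Cax Da) eqxx Ebx' (ss_comp_mul_gen Cmn Cmy' Dm).
case: eqP => [Em|_] //=; subst m; exists (kcomp nu y'); split=> //.
  by rewrite -(Cmn.2 y') -?Ebx' ?Ebx // Cmy'.
have Cny : ks nu = kr y' by rewrite -Cmn.1.
move=> i; have := congr1 (fun l => D l i) Ebx'.
by rewrite /= Elam !kdeg_compE //; lia.
Qed.

Lemma ss_mul_gen_comm al be mu nu lam : cycline al be -> cycline mu nu ->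
  (forall i, D al i + D mu i <= D lam i)%N ->
  ss lam ** ((s al ** ss be) ** (s mu ** ss nu)) =
  ss lam ** ((s mu ** ss nu) ** (s al ** ss be)).
Proof.
move=> Cab Cmn le_lam; have [/ss_eq0 ->|nz] := eqVneq (rproj lam) 0.
  by rewrite !mul0x.
have le_al i : (D al i <= D lam i)%N by have := le_lam i; lia.
have le_mu i : (D mu i <= D lam i)%N by have := le_lam i; lia.
have [a [x [Cax Da Elam]]] := factor_at le_al.
have [m [y [Cmy Dm Emy]]] := factor_at le_mu.
have le_lam' i : (D mu i + D al i <= D lam i)%N by rewrite addnC.
have := ss_mul_gen_mul_gen Cab Cmn nz le_lam Cax Da Elam Cmy Dm Emy.
have := ss_mul_gen_mul_gen Cmn Cab nz le_lam' Cmy Dm Emy Cax Da Elam.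
rewrite andbC; case: (_ && _) => /=; last by move=> -> ->.
move=> [l2 [-> E2 D2]] [l1 [-> E1 D1]].
apply: ss_eq_of_rproj_eq; last by rewrite E1 E2.
apply/ffunP => i.
(* [ffunP] yields a different [fun_of_fin] instance than [D1], [D2]; lia needs equal atoms *)
by change (D l1 i = D l2 i); have := D1 i; have := D2 i; lia.
Qed.

Lemma eq_p_mul_of_ss (v : kvert G) (n : Nk k) y z : row_finite_no_sources G ->
  (forall lam, kr lam = v -> D lam = n -> ss lam ** y = ss lam ** z) ->
  p v ** y = p v ** z.
Proof.
move=> Hrf Hss; have [n0|n0] := eqVneq n (Nk0 k).
  by subst n; rewrite -(kp_conv_ss Hkp v) Hss ?kr_id ?kdeg_id.
have [[l Hl] _] := Hrf v n.
have Hu lam : lam \in undup l <-> kr lam = v /\ D lam = n by rewrite mem_undup.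
rewrite (kp4 Hkp (elimN eqP n0) (undup_uniq l) Hu) !(mul_suml Halg).
by apply: eq_big_seq => lam /Hu [lam_v lam_n]; rewrite -!mulA Hss.
Qed.

Lemma gen_mul_comm al be mu nu : row_finite_no_sources G ->
  cycline al be -> cycline mu nu ->
  (s al ** ss be) ** (s mu ** ss nu) = (s mu ** ss nu) ** (s al ** ss be).
Proof.
move=> Hrf Cab Cmn; set t := s al ** ss be; set u := s mu ** ss nu.
pose n : Nk k := [ffun i => D al i + D mu i]%N.
have le_n lam : D lam = n -> forall i, (D al i + D mu i <= D lam i)%N.
  by move=> -> i; rewrite ffunE.
have t_p : t = p (kr al) ** t by rewrite /t mulA (kp2_rs Hkp).
have u_p : u = p (kr mu) ** u by rewrite /u mulA (kp2_rs Hkp).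
have tu : t ** u = p (kr al) ** (u ** t).
  rewrite {1}t_p -mulA.
  apply: (eq_p_mul_of_ss (n := n)) => // lam _ /le_n le_lam.
  exact: ss_mul_gen_comm.
have ut : u ** t = p (kr mu) ** (t ** u).
  rewrite {1}u_p -mulA.
  apply: (eq_p_mul_of_ss (n := n)) => // lam _ /le_n le_lam.
  by apply: ss_mul_gen_comm => // i; rewrite addnC.
have [E|N] := eqVneq (kr al) (kr mu).
  by rewrite tu E mulA -u_p.
have tu0 : t ** u = 0.
  by rewrite tu ut mulA (kp1_orth Hkp (elimN eqP N)) mul0x.
by rewrite tu0 ut tu0 mulx0.
Qed.

End KumjianPaskFamily.

Theorem lemma4p4 (R : comPzRingType) (k : nat) (G : kgraph k)
    (A : lmodType R) (mul : A -> A -> A) (p : kvert G -> A) (s ss : kpath G -> A) :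
  row_finite_no_sources G ->
  KP_universal mul p s ss ->
  forall x y, cycline_subalg mul s ss x -> cycline_subalg mul s ss y ->
    mul x y = mul y x.
Proof.
move=> Hrf [Halg [Hkp _]]; apply: (gen_subalg_comm Halg).
by move=> _ _ [al [be [Cab ->]]] [mu [nu [Cmn ->]]]; exact: (gen_mul_comm Halg Hkp Hrf).
Qed.
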